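(* Let $K\ge 2$ and let $\{\ell_t^a\}_{t\ge1,\,a\in[K]}$ be an oblivious adversarial loss sequence with $\ell_t^a\in[0,1]$ and effective loss range $\varepsilon$. Then for every $T\ge 1$ the expected regret of SODA satisfies \[ \mathcal{R}_T \le 4\varepsilon\sqrt{(K-1)\ln K}\,\sqrt{T+(K-1)\sqrt{T}\left(2+\sqrt{\ln\!\big(\sqrt{T}(K-1)\big)/2}\right)} + 4(K-1)\ln K . \]
   Context: Setting (prediction with limited advice, one extra observation): there are $K$ arms, $[K]=\{1,\dots,K\}$, and losses $\ell_t^a\in[0,1]$ for rounds $t=1,2,\dots$. In each round $t$ the learner picks a primary arm $A_t\in[K]$, suffers and observes $\ell_t^{A_t}$, and additionally picks a secondary arm $B_t$ (chosen after $A_t$) and observes, but does not suffer, $\ell_t^{B_t}$. An oblivious adversary fixes all losses (deterministically) before the game starts. The effective loss range is the smallest $\varepsilon$ such that $|\ell_t^a-\ell_t^{a'}|\le\varepsilon$ for all $t$ and all $a,a'\in[K]$ (almost surely); $\varepsilon\le 1$. The expected regret is $\mathcal{R}_T=\mathbb{E}[\sum_{t=1}^T\ell_t^{A_t}]-\min_{a\in[K]}\mathbb{E}[\sum_{t=1}^T\ell_t^a]$, expectations over all randomness. SODA (Second Order Difference Adjustments): for each round $t$, draw $A_t\sim \mathbf p_t$, then draw $B_t$ uniformly from $[K]\setminus\{A_t\}$, observe $\ell_t^{A_t},\ell_t^{B_t}$, and set the loss difference estimators $\widetilde{\Delta\ell}_t^a=(K-1)\mathbb 1(B_t=a)(\ell_t^{B_t}-\ell_t^{A_t})$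 for all $a\in[K]$. Let $D_t(a)=\sum_{s=1}^t\widetilde{\Delta\ell}_s^a$, $S_t(a)=\sum_{s=1}^t(\widetilde{\Delta\ell}_s^a)^2$, with $D_0=S_0=0$. The learning rate is $\eta_t=\min\{\sqrt{\ln K/(\max_a S_{t-1}(a)+(K-1)^2)},\,1/(2(K-1))\}$ and \[p_t^a=\frac{\exp(-\eta_tD_{t-1}(a)-\eta_t^2S_{t-1}(a))}{\sum_{b=1}^K\exp(-\eta_tD_{t-1}(b)-\eta_t^2S_{t-1}(b))}\] (so $\mathbf p_1$ is uniform). *)

From Stdlib Require Import Reals List Arith.
Import ListNotations.
Open Scope R_scope.

(* Arms are 0..K-1 (standing for [K] = {1..K}); rounds are t = 1, 2, ...
   A loss sequence is ell : nat -> nat -> R, ell t a = loss of arm a at round t. *)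

Definition rsum (l : list nat) (f : nat -> R) : R :=
  fold_right (fun x acc => f x + acc) 0 l.

Definition arms (K : nat) : list nat := seq 0 K.

Definition est (ell : nat -> nat -> R) (K s A B a : nat) : R :=
  if Nat.eqb B a then INR (K - 1) * (ell s B - ell s A) else 0.

(* history: list of (round s, primary arm A_s, secondary arm B_s) *)
Definition hist := list (nat * nat * nat).

Definition Dsum (ell : nat -> nat -> R) (K : nat) (h : hist) (a : nat) : R :=
  fold_right (fun x acc => match x with (s, A, B) => est ell K s A B a + acc end) 0 h.

Definition Ssum (ell : nat -> nat -> R) (K : nat) (h : hist) (a : nat) : R :=
  fold_right (fun x acc => match x with (s, A, B) => (est ell K s A B a) ^ 2 + acc end) 0 h.

(* learning rate eta_t, computed from the history of rounds 1..t-1 *)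
Definition eta (ell : nat -> nat -> R) (K : nat) (h : hist) : R :=
  Rmin (sqrt (ln (INR K) /
              (fold_right Rmax 0 (map (Ssum ell K h) (arms K)) + (INR (K - 1)) ^ 2)))
       (1 / (2 * INR (K - 1))).

Definition weight (ell : nat -> nat -> R) (K : nat) (h : hist) (a : nat) : R :=
  exp (- eta ell K h * Dsum ell K h a - (eta ell K h) ^ 2 * Ssum ell K h a).

Definition prob (ell : nat -> nat -> R) (K : nat) (h : hist) (a : nat) : R :=
  weight ell K h a / rsum (arms K) (weight ell K h).

(* Expected loss suffered over n rounds starting at round t with history h:
   A_t ~ p_t, B_t uniform on [K] \ {A_t}. *)
Fixpoint EL (ell : nat -> nat -> R) (K : nat) (n t : nat) (h : hist) : R :=
  match n with
  | O => 0
  | S n' =>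
      rsum (arms K) (fun A =>
        rsum (arms K) (fun B =>
          if Nat.eqb B A then 0
          else prob ell K h A * (1 / INR (K - 1)) *
               (ell t A + EL ell K n' (S t) ((t, A, B) :: h))))
  end.

Definition SODA_expected_loss (ell : nat -> nat -> R) (K T : nat) : R :=
  EL ell K T 1 nil.

Definition cum_loss (ell : nat -> nat -> R) (a T : nat) : R :=
  rsum (seq 1 T) (fun t => ell t a).

Definition SODA_regret (ell : nat -> nat -> R) (K T : nat) : R :=
  SODA_expected_loss ell K T
  - fold_right Rmin (cum_loss ell 0 T) (map (fun a => cum_loss ell a T) (arms K)).

(* Fix a comparator arm [a]. Since the loss-difference estimator is unbiased, the expected
   regret against [a] equals the expectation of [sum_t sum_b p_t^b Δ_t^b - D_T(a)], and the
   second-order exponential-weights analysis bounds this quantity on every realised history by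
   [3 sqrt (ln K * max_b S_T(b)) + 4 (K-1) ln K]. The estimate [Δ_t^b] vanishes unless [b] is
   the secondary arm, and is then at most [(K-1) ε] in absolute value; hence
   [S_T(b) <= ((K-1) ε)^2 N_b], where [N_b] counts the rounds with [B_t = b], and [max_b S_T(b)]
   is controlled by [ln (sum_b 2 ^ N_b)], whose argument has expectation at most
   [K (1 + 1/(K-1)) ^ T]. Linearising the square root and the logarithm and optimising the free
   parameter gives [3 ε sqrt ((K-1) ln K ((K-1) ln K + T) / ln 2) + 4 (K-1) ln K], which implies
   the claim when [T > 16 (K-1) ln K]; for shorter horizons the trivial bound [ε T] suffices. *)

From Stdlib Require Import Reals List Arith Lra Lia Psatz.
From Coquelicot Require Import Coquelicot.
Import ListNotations.
Open Scope R_scope.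

Lemma exp_le_compat x y : x <= y -> exp x <= exp y.
Proof. intros [H| ->]; [left; apply exp_increasing|]; lra. Qed.

Lemma ln_le_sub_1 x : 0 < x -> ln x <= x - 1.
Proof.
  intros Hx. destruct (Rle_dec (ln x) (x - 1)) as [H|H]; [exact H|].
  assert (Hlt : exp (x - 1) < exp (ln x)) by (apply exp_increasing; lra).
  rewrite exp_ln in Hlt by exact Hx.
  pose proof (exp_ineq1_le (x - 1)). lra.
Qed.

Lemma ln_le_div_add_ln_sub_1 x c : 0 < x -> 0 < c -> ln x <= x / c + ln c - 1.
Proof.
  intros Hx Hc. pose proof (ln_le_sub_1 (x / c) (Rdiv_lt_0_compat _ _ Hx Hc)) as H.
  rewrite ln_div in H by assumption. lra.
Qed.

Lemma ln_mul_pow_le x y n : 0 < x -> 0 <= y -> ln (x * (1 + y) ^ n) <= ln x + INR n * y.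
Proof.
  intros Hx Hy. rewrite ln_mult, ln_pow by (try apply pow_lt; lra).
  pose proof (ln_le_sub_1 (1 + y) ltac:(lra)).
  assert (INR n * ln (1 + y) <= INR n * y) by (apply Rmult_le_compat_l; [apply pos_INR|lra]).
  lra.
Qed.

Lemma ln_2_ge_3_5 : 3 / 5 <= ln 2.
Proof.
  assert (H15 : exp (1 / 5) <= 5 / 4).
  { pose proof (exp_ineq1_le (- (1 / 5))) as H.
    pose proof (exp_pos (1 / 5)).
    assert (E : exp (- (1 / 5)) * exp (1 / 5) = 1) by (rewrite <- exp_plus, <- exp_0; f_equal; ring).
    nra. }
  assert (H35 : exp (3 / 5) <= 2).
  { replace (3 / 5) with (1 / 5 + 1 / 5 + 1 / 5) by field. rewrite !exp_plus.
    pose proof (exp_pos (1 / 5)).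
    assert (exp (1 / 5) * exp (1 / 5) <= 5 / 4 * (5 / 4)) by (apply Rmult_le_compat; lra).
    assert (exp (1 / 5) * exp (1 / 5) * exp (1 / 5) <= 5 / 4 * (5 / 4) * (5 / 4))
      by (apply Rmult_le_compat; nra).
    lra. }
  rewrite <- (ln_exp (3 / 5)). apply ln_le; [apply exp_pos|exact H35].
Qed.

(* The second-order inequality behind the [- eta^2 S] correction: equivalently
   [ln (1 - y) >= - y - y^2] on [[-1/2, 1/2]], obtained from the mean value theorem
   applied to [(1 - x) exp (x + x^2)], whose derivative has the sign of [x]. *)
Lemma exp_neg_sub_sq_le y : -1/2 <= y <= 1/2 -> exp (- y - y ^ 2) <= 1 - y.
Proof.
  intros Hy.
  set (g := fun x => (1 - x) * exp (x + x * x)).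
  set (dg := fun x => exp (x + x * x) * (x * (1 - 2 * x))).
  assert (Hd : forall x, is_derive g x (dg x)).
  { intros x. unfold g, dg. auto_derive; [auto|]. ring. }
  destruct (MVT_gen g 0 y dg) as [c [Hc Heq]].
  - intros x _. apply Hd.
  - intros x _. apply derivable_continuous_pt, ex_derive_Reals_0. exists (dg x). apply Hd.
  - assert (Hg0 : g 0 = 1) by (unfold g; rewrite Rplus_0_l, Rmult_0_l, exp_0; ring).
    assert (Hgy : 1 <= g y).
    { assert (0 <= dg c * (y - 0)); [|lra].
      unfold dg. pose proof (exp_pos (c + c * c)).
      destruct (Rle_dec 0 y).
      - rewrite Rmin_left in Hc by lra. rewrite Rmax_right in Hc by lra.
        apply Rmult_le_pos; [|lra]. apply Rmult_le_pos; nra.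
      - rewrite Rmin_right in Hc by lra. rewrite Rmax_left in Hc by lra.
        replace (exp (c + c * c) * (c * (1 - 2 * c)) * (y - 0))
          with (exp (c + c * c) * ((- c) * (1 - 2 * c) * (- y))) by ring.
        apply Rmult_le_pos; [lra|]. apply Rmult_le_pos; nra. }
    unfold g in Hgy.
    replace (- y - y ^ 2) with (- (y + y * y)) by ring.
    rewrite exp_Ropp. pose proof (exp_pos (y + y * y)).
    apply (Rmult_le_reg_r (exp (y + y * y))); [lra|].
    rewrite Rinv_l by lra. lra.
Qed.

Lemma exp_mul_le_convex r v : 0 <= r <= 1 -> exp (r * v) <= 1 + r * (exp v - 1).
Proof.
  intros Hr.
  assert (Htan : forall y c, exp c * (1 + (y - c)) <= exp y).
  { intros y c. replace y with (c + (y - c)) at 2 by ring. rewrite exp_plus.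
    apply Rmult_le_compat_l; [left; apply exp_pos|apply exp_ineq1_le]. }
  pose proof (Htan v (r * v)) as H1. pose proof (Htan 0 (r * v)) as H2.
  rewrite exp_0 in H2.
  replace (exp (r * v)) with
    (r * (exp (r * v) * (1 + (v - r * v))) + (1 - r) * (exp (r * v) * (1 + (0 - r * v))))
    by ring.
  assert (r * (exp (r * v) * (1 + (v - r * v))) <= r * exp v) by (apply Rmult_le_compat_l; lra).
  assert ((1 - r) * (exp (r * v) * (1 + (0 - r * v))) <= (1 - r) * 1)
    by (apply Rmult_le_compat_l; lra).
  lra.
Qed.

Lemma sqrt_plus_le x y : 0 <= x -> 0 <= y -> sqrt (x + y) <= sqrt x + sqrt y.
Proof.
  intros Hx Hy. pose proof (sqrt_pos x). pose proof (sqrt_pos y).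
  apply Rsqr_incr_0_var; [|lra]. unfold Rsqr.
  rewrite sqrt_sqrt by lra.
  pose proof (sqrt_sqrt x Hx). pose proof (sqrt_sqrt y Hy). nra.
Qed.

Lemma two_sqrt_le_div_plus x d : 0 <= x -> 0 < d -> 2 * sqrt x <= x / d + d.
Proof.
  intros Hx Hd. pose proof (sqrt_sqrt x Hx). pose proof (Rle_0_sqr (sqrt x - d)).
  unfold Rsqr in *. apply (Rmult_le_reg_r d); [exact Hd|].
  replace ((x / d + d) * d) with (x + d * d) by (field; lra). nra.
Qed.

Lemma le_two_sqrt_of_forall_le_div_plus x M : 0 <= M ->
  (forall d, 0 < d -> x <= M / d + d) -> x <= 2 * sqrt M.
Proof.
  intros HM Hx. destruct (Req_dec M 0) as [-> | HM0].
  - rewrite sqrt_0. destruct (Rle_dec x 0) as [|Hpos]; [lra|].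
    specialize (Hx (x / 3) ltac:(lra)). unfold Rdiv in Hx. rewrite Rmult_0_l in Hx. lra.
  - assert (Hs : 0 < sqrt M) by (apply sqrt_lt_R0; lra).
    specialize (Hx (sqrt M) Hs).
    replace (M / sqrt M) with (sqrt M) in Hx; [lra|].
    rewrite <- (sqrt_sqrt M) at 2 by lra. field. lra.
Qed.

Lemma mul_sub_le_sqrt_sub x c Q Q' : 0 <= Q <= Q' -> 0 <= x -> x * sqrt Q' <= c ->
  x * (Q' - Q) <= 2 * c * (sqrt Q' - sqrt Q).
Proof.
  intros HQ Hx Hc.
  pose proof (sqrt_sqrt Q ltac:(lra)). pose proof (sqrt_sqrt Q' ltac:(lra)).
  pose proof (sqrt_pos Q). assert (sqrt Q <= sqrt Q') by (apply sqrt_le_1_alt; lra).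
  replace (Q' - Q) with ((sqrt Q' - sqrt Q) * (sqrt Q' + sqrt Q)) by nra.
  assert (x * (sqrt Q' + sqrt Q) <= 2 * c) by nra. nra.
Qed.

Lemma rsum_ext l f g : (forall x, In x l -> f x = g x) -> rsum l f = rsum l g.
Proof.
  induction l as [|x l IH]; intros H; simpl; [reflexivity|].
  rewrite (H x (or_introl eq_refl)), IH; [reflexivity|]. intros y Hy; apply H; right; exact Hy.
Qed.

Lemma rsum_le l f g : (forall x, In x l -> f x <= g x) -> rsum l f <= rsum l g.
Proof.
  induction l as [|x l IH]; intros H; simpl; [lra|].
  apply Rplus_le_compat; [apply H; left; reflexivity|apply IH; intros y Hy; apply H; right; exact Hy].
Qed.

Lemma rsum_plus l f g : rsum l (fun x => f x + g x) = rsum l f + rsum l g.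
Proof. induction l; simpl; [ring|rewrite IHl; ring]. Qed.

Lemma rsum_minus l f g : rsum l (fun x => f x - g x) = rsum l f - rsum l g.
Proof. induction l; simpl; [ring|rewrite IHl; ring]. Qed.

Lemma rsum_mult_l l c f : rsum l (fun x => c * f x) = c * rsum l f.
Proof. induction l; simpl; [ring|rewrite IHl; ring]. Qed.

Lemma rsum_mult_r l c f : rsum l (fun x => f x * c) = rsum l f * c.
Proof. induction l; simpl; [ring|rewrite IHl; ring]. Qed.

Lemma rsum_const l c : rsum l (fun _ => c) = INR (length l) * c.
Proof. induction l; simpl length; [simpl; ring|rewrite S_INR; simpl; rewrite IHl; ring]. Qed.

Lemma rsum_nonneg l f : (forall x, In x l -> 0 <= f x) -> 0 <= rsum l f.
Proof.
  intros H. replace 0 with (rsum l (fun _ => 0)) by (rewrite rsum_const; ring).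
  apply rsum_le. exact H.
Qed.

Lemma rsum_ge_term l f a : (forall x, In x l -> 0 <= f x) -> In a l -> f a <= rsum l f.
Proof.
  induction l as [|x l IH]; intros H Ha; [destruct Ha|]. simpl.
  assert (0 <= rsum l f) by (apply rsum_nonneg; intros; apply H; right; assumption).
  destruct Ha as [<-|Ha]; [lra|].
  assert (0 <= f x) by (apply H; left; reflexivity).
  assert (f a <= rsum l f) by (apply IH; [intros; apply H; right|]; assumption).
  lra.
Qed.

Lemma rsum_pos l f : (forall x, In x l -> 0 < f x) -> l <> [] -> 0 < rsum l f.
Proof.
  destruct l as [|x l]; intros H Hl; [congruence|].
  apply (Rlt_le_trans _ (f x)); [apply H; left; reflexivity|].
  apply rsum_ge_term; [intros; left; apply H|left]; auto.
Qed.

Lemma rsum_indicator l f a : NoDup l -> In a l ->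
  rsum l (fun x => if Nat.eqb x a then f x else 0) = f a.
Proof.
  induction l as [|x l IH]; intros Hn Ha; [destruct Ha|]. inversion Hn as [|? ? Hx Hn']; subst.
  simpl. destruct (Nat.eqb_spec x a) as [->|Hne].
  - rewrite (rsum_ext _ _ (fun _ => 0)), rsum_const; [ring|].
    intros y Hy. destruct (Nat.eqb_spec y a); [subst; contradiction|reflexivity].
  - destruct Ha as [->|Ha]; [congruence|]. rewrite IH by assumption. ring.
Qed.

Lemma in_arms K a : In a (arms K) <-> (a < K)%nat.
Proof. unfold arms. rewrite in_seq. lia. Qed.

Lemma arms_nonempty K : (1 <= K)%nat -> arms K <> [].
Proof. intros HK. unfold arms. destruct K; [lia|discriminate]. Qed.

Lemma arms_length K : length (arms K) = K.
Proof. apply length_seq. Qed.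

Lemma rsum_arms_const K c : rsum (arms K) (fun _ => c) = INR K * c.
Proof. rewrite rsum_const, arms_length. reflexivity. Qed.

Lemma rsum_arms_indicator K f a : (a < K)%nat ->
  rsum (arms K) (fun x => if Nat.eqb x a then f x else 0) = f a.
Proof. intros Ha. apply rsum_indicator; [apply seq_NoDup|apply in_arms, Ha]. Qed.

Lemma rsum_arms_drop K f a : (a < K)%nat ->
  rsum (arms K) (fun x => if Nat.eqb x a then 0 else f x) = rsum (arms K) f - f a.
Proof.
  intros Ha. rewrite <- (rsum_arms_indicator K f a Ha), <- rsum_minus.
  apply rsum_ext. intros x _. destruct (Nat.eqb x a); ring.
Qed.

Lemma fold_max_ge (f : nat -> R) l a : In a l -> f a <= fold_right Rmax 0 (map f l).
Proof.
  induction l as [|x l IH]; intros H; [destruct H|]. simpl.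
  destruct H as [->|H]; [apply Rmax_l|]. eapply Rle_trans; [apply IH, H|apply Rmax_r].
Qed.

Lemma fold_max_nonneg (f : nat -> R) l : 0 <= fold_right Rmax 0 (map f l).
Proof. induction l; simpl; [lra|]. eapply Rle_trans; [apply IHl|apply Rmax_r]. Qed.

Lemma fold_max_le (f : nat -> R) l b : 0 <= b -> (forall a, In a l -> f a <= b) ->
  fold_right Rmax 0 (map f l) <= b.
Proof.
  induction l as [|x l IH]; intros Hb H; simpl; [exact Hb|].
  apply Rmax_lub; [apply H; left; reflexivity|apply IH; [exact Hb|intros; apply H; right; assumption]].
Qed.

Lemma fold_min_attained (f : nat -> R) x0 l :
  fold_right Rmin x0 (map f l) = x0 \/ exists a, In a l /\ fold_right Rmin x0 (map f l) = f a.
Proof.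
  induction l as [|x l IH]; simpl; [left; reflexivity|].
  destruct (Rle_dec (f x) (fold_right Rmin x0 (map f l))) as [Hle|Hle].
  - right; exists x; split; [left; reflexivity|]. apply Rmin_left, Hle.
  - rewrite Rmin_right by lra.
    destruct IH as [E|[a [Ha E]]]; [left; exact E|right; exists a; split; [right|]; assumption].
Qed.

(* Jensen's inequality for the concave map [x |-> x ^ r], written with exponentials. *)
Lemma rsum_exp_mul_le l u r : l <> [] -> 0 < r <= 1 ->
  rsum l (fun a => exp (r * u a))
  <= INR (length l) * exp (r * ln (rsum l (fun a => exp (u a)) / INR (length l))).
Proof.
  intros Hl Hr. set (n := INR (length l)). set (U := rsum l (fun a => exp (u a))).
  assert (Hn : 0 < n) by (apply lt_0_INR; destruct l; [congruence|simpl; lia]).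
  assert (HU : 0 < U) by (apply rsum_pos; [intros; apply exp_pos|exact Hl]).
  set (c := ln (U / n)).
  rewrite (rsum_ext _ _ (fun a => exp (r * c) * exp (r * (u a - c))))
    by (intros; rewrite <- exp_plus; f_equal; ring).
  rewrite rsum_mult_l, (Rmult_comm n). apply Rmult_le_compat_l; [left; apply exp_pos|].
  apply (Rle_trans _ (rsum l (fun a => 1 + r * (exp (u a - c) - 1)))).
  { apply rsum_le. intros. apply exp_mul_le_convex. lra. }
  rewrite (rsum_ext _ _ (fun a => (1 - r) + (r * (n / U)) * exp (u a))).
  - rewrite rsum_plus, rsum_const, rsum_mult_l. fold n U. right. field. lra.
  - intros a _. replace (u a - c) with (u a + - c) by ring.
    rewrite exp_plus, exp_Ropp. unfold c. rewrite exp_ln by (apply Rdiv_lt_0_compat; lra).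
    field. lra.
Qed.

(** * Expectations over the play of SODA *)

Section SODA.

Variable ell : nat -> nat -> R.
Variable K : nat.
Hypothesis HK : (2 <= K)%nat.

Let Km1_pos : 0 < INR (K - 1).
Proof. apply lt_0_INR. lia. Qed.

Let INR_Km1 : INR (K - 1) = INR K - 1.
Proof. rewrite minus_INR by lia. simpl. ring. Qed.

Lemma prob_nonneg h a : 0 <= prob ell K h a.
Proof.
  unfold prob. apply Rdiv_le_0_compat; [left; apply exp_pos|].
  apply rsum_pos; [intros; apply exp_pos|apply arms_nonempty; lia].
Qed.

Lemma prob_sum h : rsum (arms K) (prob ell K h) = 1.
Proof.
  unfold prob, Rdiv. rewrite rsum_mult_r. apply Rinv_r, Rgt_not_eq.
  apply rsum_pos; [intros; apply exp_pos|apply arms_nonempty; lia].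
Qed.

Definition round_mean (h : hist) (X : nat -> nat -> R) : R :=
  rsum (arms K) (fun A => rsum (arms K) (fun B =>
    if Nat.eqb B A then 0 else prob ell K h A * (1 / INR (K - 1)) * X A B)).

Fixpoint future_mean (n t : nat) (h : hist) (f : hist -> R) : R :=
  match n with
  | O => f h
  | S n' => round_mean h (fun A B => future_mean n' (S t) ((t, A, B) :: h) f)
  end.

Lemma round_mean_ext h X Y : (forall A B, (A < K)%nat -> (B < K)%nat -> X A B = Y A B) ->
  round_mean h X = round_mean h Y.
Proof.
  intros H. unfold round_mean. apply rsum_ext; intros A HA; apply rsum_ext; intros B HB.
  apply in_arms in HA, HB. rewrite H by assumption. reflexivity.
Qed.

Lemma round_mean_plus h X Y :
  round_mean h (fun A B => X A B + Y A B) = round_mean h X + round_mean h Y.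
Proof.
  unfold round_mean. rewrite <- rsum_plus. apply rsum_ext; intros A _.
  rewrite <- rsum_plus. apply rsum_ext; intros B _. destruct (Nat.eqb B A); ring.
Qed.

Lemma round_mean_mult_l h c X : round_mean h (fun A B => c * X A B) = c * round_mean h X.
Proof.
  unfold round_mean. rewrite <- rsum_mult_l. apply rsum_ext; intros A _.
  rewrite <- rsum_mult_l. apply rsum_ext; intros B _. destruct (Nat.eqb B A); ring.
Qed.

Lemma rsum_secondary h A Z : (A < K)%nat ->
  rsum (arms K) (fun B => if Nat.eqb B A then 0 else prob ell K h A * (1 / INR (K - 1)) * Z B)
  = prob ell K h A * (1 / INR (K - 1)) * (rsum (arms K) Z - Z A).
Proof.
  intros HA. rewrite <- rsum_arms_drop by exact HA.
  rewrite <- rsum_mult_l. apply rsum_ext; intros B _. destruct (Nat.eqb B A); ring.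
Qed.

Lemma round_mean_primary h (Z : nat -> R) :
  round_mean h (fun A _ => Z A) = rsum (arms K) (fun A => prob ell K h A * Z A).
Proof.
  unfold round_mean. apply rsum_ext; intros A HA. apply in_arms in HA.
  rewrite rsum_secondary, rsum_arms_const, INR_Km1 by assumption.
  rewrite INR_Km1 in Km1_pos. field. lra.
Qed.

Lemma round_mean_const h v : round_mean h (fun _ _ => v) = v.
Proof. rewrite round_mean_primary, rsum_mult_r, prob_sum. ring. Qed.

Lemma round_mean_le h X Y :
  (forall A B, (A < K)%nat -> (B < K)%nat -> A <> B -> X A B <= Y A B) ->
  round_mean h X <= round_mean h Y.
Proof.
  intros H. unfold round_mean. apply rsum_le; intros A HA; apply rsum_le; intros B HB.
  apply in_arms in HA, HB. destruct (Nat.eqb_spec B A); [lra|].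
  apply Rmult_le_compat_l; [|apply H; auto].
  apply Rmult_le_pos; [apply prob_nonneg|]. left; apply Rdiv_lt_0_compat; lra.
Qed.

Lemma round_mean_rsum h l (F : nat -> nat -> nat -> R) :
  round_mean h (fun A B => rsum l (fun a => F a A B)) = rsum l (fun a => round_mean h (F a)).
Proof.
  induction l as [|x l IH]; simpl; [apply round_mean_const|].
  rewrite round_mean_plus, IH. reflexivity.
Qed.

Lemma future_mean_ext n t h f g : (forall h', f h' = g h') ->
  future_mean n t h f = future_mean n t h g.
Proof.
  intros H; revert t h; induction n; intros t h; simpl; [apply H|].
  apply round_mean_ext; intros; apply IHn.
Qed.

Lemma future_mean_plus n t h f g :
  future_mean n t h (fun h' => f h' + g h') = future_mean n t h f + future_mean n t h g.
Proof.
  revert t h; induction n; intros t h; simpl; [reflexivity|].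
  rewrite <- round_mean_plus. apply round_mean_ext; intros; apply IHn.
Qed.

Lemma future_mean_mult_l n t h c f :
  future_mean n t h (fun h' => c * f h') = c * future_mean n t h f.
Proof.
  revert t h; induction n; intros t h; simpl; [reflexivity|].
  rewrite <- round_mean_mult_l. apply round_mean_ext; intros; apply IHn.
Qed.

Lemma future_mean_minus n t h f g :
  future_mean n t h (fun h' => f h' - g h') = future_mean n t h f - future_mean n t h g.
Proof.
  rewrite (future_mean_ext _ _ _ _ (fun h' => f h' + (-1) * g h')) by (intros; ring).
  rewrite future_mean_plus, future_mean_mult_l. ring.
Qed.

Lemma future_mean_const n t h c : future_mean n t h (fun _ => c) = c.
Proof.
  revert t h; induction n; intros t h; simpl; [reflexivity|].
  rewrite (round_mean_ext _ _ (fun _ _ => c)); [apply round_mean_const|intros; apply IHn].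
Qed.

Lemma future_mean_rsum n t h l (F : nat -> hist -> R) :
  future_mean n t h (fun h' => rsum l (fun a => F a h')) = rsum l (fun a => future_mean n t h (F a)).
Proof.
  induction l as [|x l IH]; simpl; [apply future_mean_const|].
  rewrite future_mean_plus, IH. reflexivity.
Qed.

Definition entry_ok (x : nat * nat * nat) : Prop :=
  match x with (s, A, B) => (1 <= s)%nat /\ (A < K)%nat /\ (B < K)%nat end.

Definition hist_ok (h : hist) : Prop := List.Forall entry_ok h.

Lemma future_mean_le n t h f g : (forall h', hist_ok h' -> f h' <= g h') ->
  hist_ok h -> (1 <= t)%nat -> future_mean n t h f <= future_mean n t h g.
Proof.
  intros Hfg; revert t h; induction n; intros t h Hh Ht; simpl; [apply Hfg, Hh|].
  apply round_mean_le. intros A B HA HB _. apply IHn; [constructor; [repeat split|]|]; auto; lia.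
Qed.

Fixpoint hist_sum (g : nat -> hist -> nat -> nat -> R) (h : hist) : R :=
  match h with
  | [] => 0
  | (s, A, B) :: h' => g s h' A B + hist_sum g h'
  end.

Lemma Dsum_cons s A B h a :
  Dsum ell K ((s, A, B) :: h) a = est ell K s A B a + Dsum ell K h a.
Proof. reflexivity. Qed.

Lemma Ssum_cons s A B h a :
  Ssum ell K ((s, A, B) :: h) a = est ell K s A B a ^ 2 + Ssum ell K h a.
Proof. reflexivity. Qed.

Lemma Dsum_hist_sum h a : Dsum ell K h a = hist_sum (fun s _ A B => est ell K s A B a) h.
Proof. induction h as [|[[s A] B] h IH]; simpl; [reflexivity|rewrite IH; reflexivity]. Qed.

Lemma future_mean_hist_sum n t h g (c : nat -> R) :
  (forall t h, round_mean h (g t h) = c t) ->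
  future_mean n t h (hist_sum g) = hist_sum g h + rsum (seq t n) c.
Proof.
  intros Hc; revert t h; induction n; intros t h; simpl; [ring|].
  rewrite (round_mean_ext _ _ (fun A B => g t h A B + (hist_sum g h + rsum (seq (S t) n) c))).
  - rewrite round_mean_plus, round_mean_const, Hc. ring.
  - intros A B _ _. rewrite IHn. simpl. ring.
Qed.

Lemma EL_eq_future_mean n t h :
  EL ell K n t h = future_mean n t h (hist_sum (fun s _ A _ => ell s A))
                   - hist_sum (fun s _ A _ => ell s A) h.
Proof.
  revert t h; induction n; intros t h; [simpl; ring|].
  change (EL ell K (S n) t h)
    with (round_mean h (fun A B => ell t A + EL ell K n (S t) ((t, A, B) :: h))).
  cbn [future_mean].
  rewrite (round_mean_ext _ (fun A B => future_mean n (S t) ((t, A, B) :: h) _)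
             (fun A B => (ell t A + EL ell K n (S t) ((t, A, B) :: h))
                         + hist_sum (fun s _ A _ => ell s A) h)).
  - rewrite (round_mean_plus h _ (fun _ _ => hist_sum (fun s _ A _ => ell s A) h)).
    rewrite round_mean_const. ring.
  - intros A B _ _. rewrite IHn. simpl. ring.
Qed.

Definition mix_loss h t := rsum (arms K) (fun A => prob ell K h A * ell t A).

Lemma round_mean_est h t a : (a < K)%nat ->
  round_mean h (fun A B => est ell K t A B a) = ell t a - mix_loss h t.
Proof.
  intros Ha. unfold round_mean, mix_loss.
  rewrite (rsum_ext _ _ (fun A => prob ell K h A * ell t a - prob ell K h A * ell t A)).
  - rewrite rsum_minus, rsum_mult_r, prob_sum. ring.
  - intros A HA. apply in_arms in HA. rewrite rsum_secondary by exact HA.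
    unfold est. rewrite rsum_arms_indicator by exact Ha.
    replace (if Nat.eqb A a then INR (K - 1) * (ell t A - ell t A) else 0) with 0
      by (destruct (Nat.eqb A a); ring).
    field. lra.
Qed.

(* The paper's [sum_a p_t^a Δ_t^a]: the estimated loss of the mixture [p_t] relative to the
   primary arm. *)
Definition mix_est (s : nat) (h : hist) (A B : nat) : R :=
  rsum (arms K) (fun a => prob ell K h a * est ell K s A B a).

Lemma round_mean_mix_est h t : round_mean h (mix_est t h) = 0.
Proof.
  unfold mix_est. rewrite round_mean_rsum.
  rewrite (rsum_ext _ _ (fun a => prob ell K h a * ell t a - prob ell K h a * mix_loss h t)).
  - rewrite rsum_minus, rsum_mult_r, prob_sum. unfold mix_loss. ring.
  - intros a Ha. apply in_arms in Ha. rewrite round_mean_mult_l, round_mean_est by exact Ha. ring.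
Qed.

Lemma cum_loss_eq a T :
  cum_loss ell a T = future_mean T 1 [] (hist_sum (fun s _ _ _ => ell s a)).
Proof.
  rewrite (future_mean_hist_sum _ _ _ _ (fun t => ell t a)) by (intros; apply round_mean_const).
  unfold cum_loss. simpl. ring.
Qed.

Lemma regret_vs_arm_eq a T :
  SODA_expected_loss ell K T - cum_loss ell a T
  = future_mean T 1 [] (hist_sum (fun s _ A _ => ell s A - ell s a)).
Proof.
  unfold SODA_expected_loss. rewrite EL_eq_future_mean, cum_loss_eq. cbn [hist_sum].
  rewrite Rminus_0_r, <- future_mean_minus. apply future_mean_ext. intros h.
  induction h as [|[[s A] B] h IH]; simpl; lra.
Qed.

Lemma regret_vs_arm_eq_mix_est a T : (a < K)%nat ->
  SODA_expected_loss ell K T - cum_loss ell a T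
  = future_mean T 1 [] (fun h => hist_sum mix_est h - Dsum ell K h a).
Proof.
  intros Ha. rewrite regret_vs_arm_eq.
  set (g := fun s h A B => ell s A - ell s a - mix_est s h A B + est ell K s A B a).
  assert (Hg : future_mean T 1 [] (hist_sum g) = 0).
  { rewrite (future_mean_hist_sum _ _ _ _ (fun _ => 0)); [simpl; rewrite rsum_const; ring|].
    intros t h. unfold g.
    rewrite (round_mean_ext _ _ (fun A B => (ell t A + (-1) * ell t a)
                                           + ((-1) * mix_est t h A B + est ell K t A B a)))
      by (intros; ring).
    rewrite !round_mean_plus, !round_mean_mult_l, round_mean_primary, round_mean_const,
      round_mean_mix_est, round_mean_est by exact Ha.
    unfold mix_loss. ring. }
  rewrite <- (Rplus_0_l (future_mean _ _ _ (fun h => _ - _))), <- Hg, <- future_mean_plus.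
  apply future_mean_ext. intros h. rewrite Dsum_hist_sum. unfold g.
  induction h as [|[[s A] B] h IH]; simpl; lra.
Qed.

(** * The second-order potential *)

Hypothesis loss_in_01 : forall t a, (1 <= t)%nat -> (a < K)%nat -> 0 <= ell t a <= 1.

Lemma est_abs_le s A B a : entry_ok (s, A, B) -> Rabs (est ell K s A B a) <= INR (K - 1).
Proof.
  intros [Hs [HA HB]]. unfold est. destruct (Nat.eqb B a); [|rewrite Rabs_R0; lra].
  rewrite Rabs_mult, Rabs_pos_eq by lra.
  pose proof (loss_in_01 s A Hs HA). pose proof (loss_in_01 s B Hs HB).
  rewrite <- (Rmult_1_r (INR (K - 1))) at 2.
  apply Rmult_le_compat_l; [lra|]. apply Rabs_le. lra.
Qed.

Definition Smax h := fold_right Rmax 0 (map (Ssum ell K h) (arms K)).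

Lemma Smax_nonneg h : 0 <= Smax h.
Proof. apply fold_max_nonneg. Qed.

Lemma Smax_nil : Smax [] = 0.
Proof.
  apply Rle_antisym; [|apply Smax_nonneg].
  apply fold_max_le; [lra|]. intros. simpl. lra.
Qed.

Lemma Ssum_le_Smax h a : (a < K)%nat -> Ssum ell K h a <= Smax h.
Proof. intros Ha. apply fold_max_ge, in_arms, Ha. Qed.

Lemma Smax_cons_ge x h : Smax h <= Smax (x :: h).
Proof.
  destruct x as [[s A] B]. apply fold_max_le; [apply Smax_nonneg|].
  intros a Ha. apply in_arms in Ha. eapply Rle_trans; [|apply Ssum_le_Smax, Ha].
  rewrite Ssum_cons. pose proof (pow2_ge_0 (est ell K s A B a)). lra.
Qed.

Lemma Smax_cons_le x h : entry_ok x -> Smax (x :: h) <= Smax h + INR (K - 1) ^ 2.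
Proof.
  destruct x as [[s A] B]. intros Hx. apply fold_max_le.
  - pose proof (Smax_nonneg h). pose proof (pow2_ge_0 (INR (K - 1))). lra.
  - intros a Ha. apply in_arms in Ha. rewrite Ssum_cons.
    pose proof (est_abs_le s A B a Hx) as Habs. pose proof (Ssum_le_Smax h a Ha).
    assert (est ell K s A B a ^ 2 <= INR (K - 1) ^ 2); [|lra].
    rewrite <- (pow2_abs (est ell K s A B a)).
    apply pow_incr. split; [apply Rabs_pos|exact Habs].
Qed.

Let lnK_gt_half : / 2 < ln (INR K).
Proof.
  eapply Rlt_le_trans; [apply ln_lt_2|]. apply ln_le; [lra|].
  apply (le_INR 2 K) in HK. simpl in HK. lra.
Qed.

Lemma eta_pos h : 0 < eta ell K h.
Proof.
  pose proof (Smax_nonneg h). apply Rmin_glb_lt.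
  - apply sqrt_lt_R0, Rdiv_lt_0_compat; [lra|]. fold (Smax h). nra.
  - apply Rdiv_lt_0_compat; lra.
Qed.

Lemma eta_mul_Km1_le h : eta ell K h * INR (K - 1) <= / 2.
Proof.
  apply (Rle_trans _ (1 / (2 * INR (K - 1)) * INR (K - 1))); [|right; field; lra].
  apply Rmult_le_compat_r; [lra|apply Rmin_r].
Qed.

Lemma eta_cons_le x h : eta ell K (x :: h) <= eta ell K h.
Proof.
  unfold eta. fold (Smax h) (Smax (x :: h)).
  pose proof (Smax_cons_ge x h). pose proof (Smax_nonneg h).
  apply Rle_min_compat_r, sqrt_le_1_alt. unfold Rdiv.
  apply Rmult_le_compat_l; [lra|]. apply Rinv_le_contravar; nra.
Qed.

Lemma eta_mul_sqrt_Smax_cons_le x h : entry_ok x ->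
  eta ell K h * sqrt (Smax (x :: h)) <= sqrt (ln (INR K)).
Proof.
  intros Hx. set (V := Smax h + INR (K - 1) ^ 2).
  assert (HV : 0 < V) by (pose proof (Smax_nonneg h); unfold V; nra).
  apply (Rle_trans _ (sqrt (ln (INR K) / V) * sqrt V)).
  - apply Rmult_le_compat; [left; apply eta_pos|apply sqrt_pos|apply Rmin_l|].
    apply sqrt_le_1_alt, Smax_cons_le, Hx.
  - rewrite <- sqrt_mult_alt by (apply Rdiv_le_0_compat; lra).
    right. f_equal. field. lra.
Qed.

Lemma ln_K_div_eta_le h :
  ln (INR K) / eta ell K h
  <= sqrt (ln (INR K)) * (sqrt (Smax h) + INR (K - 1)) + 2 * INR (K - 1) * ln (INR K).
Proof.
  pose proof (Smax_nonneg h) as HQ.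
  set (L := ln (INR K)) in *. set (Q := Smax h) in *.
  assert (HsL : 0 < sqrt L) by (apply sqrt_lt_R0; lra).
  assert (Hsq : 0 <= sqrt L * (sqrt Q + INR (K - 1))) by (pose proof (sqrt_pos Q); nra).
  unfold eta. fold (Smax h) Q L. unfold Rmin. destruct (Rle_dec _ _) as [_|_].
  - assert (HV : 0 < Q + INR (K - 1) ^ 2) by nra.
    rewrite sqrt_div_alt by exact HV.
    replace (L / (sqrt L / sqrt (Q + INR (K - 1) ^ 2))) with (sqrt L * sqrt (Q + INR (K - 1) ^ 2)).
    + pose proof (sqrt_plus_le Q (INR (K - 1) ^ 2) HQ (pow2_ge_0 _)) as Hs.
      rewrite sqrt_pow2 in Hs by lra.
      assert (sqrt L * sqrt (Q + INR (K - 1) ^ 2) <= sqrt L * (sqrt Q + INR (K - 1)))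
        by (apply Rmult_le_compat_l; lra).
      nra.
    + pose proof (sqrt_lt_R0 _ HV). rewrite <- (sqrt_sqrt L) at 2 by lra. field. lra.
  - replace (L / (1 / (2 * INR (K - 1)))) with (2 * INR (K - 1) * L) by (field; lra). lra.
Qed.

Definition potential h e : R :=
  rsum (arms K) (fun a => exp (- e * Dsum ell K h a - e ^ 2 * Ssum ell K h a)).

Lemma potential_pos h e : 0 < potential h e.
Proof. apply rsum_pos; [intros; apply exp_pos|apply arms_nonempty; lia]. Qed.

Lemma potential_nil e : potential [] e = INR K.
Proof.
  unfold potential. simpl. rewrite (rsum_ext _ _ (fun _ => 1)); [rewrite rsum_arms_const; ring|].
  intros. rewrite <- exp_0. f_equal. ring.
Qed.

Lemma potential_cons_le s A B h : entry_ok (s, A, B) ->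
  potential ((s, A, B) :: h) (eta ell K h)
  <= potential h (eta ell K h) * (1 - eta ell K h * mix_est s h A B).
Proof.
  intros Hx. pose proof (eta_mul_Km1_le h) as Hsmall. pose proof (eta_pos h) as Hpos.
  set (e := eta ell K h) in *.
  set (w := fun a => exp (- e * Dsum ell K h a - e ^ 2 * Ssum ell K h a)).
  assert (Hmix : potential h e * (1 - e * mix_est s h A B)
                 = rsum (arms K) (fun a => w a * (1 - e * est ell K s A B a))).
  { assert (Hprob : forall a, prob ell K h a = w a / potential h e) by reflexivity.
    pose proof (potential_pos h e).
    unfold mix_est.
    rewrite (rsum_ext _ _ (fun a => / potential h e * (w a * est ell K s A B a)))
      by (intros; rewrite Hprob; unfold Rdiv; ring).
    rewrite (rsum_ext _ (fun a => w a * (1 - e * est ell K s A B a))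
                        (fun a => w a + (- e) * (w a * est ell K s A B a))) by (intros; ring).
    rewrite rsum_mult_l, rsum_plus, rsum_mult_l. change (rsum (arms K) w) with (potential h e).
    field. lra. }
  rewrite Hmix. unfold potential. apply rsum_le. intros a _. rewrite Dsum_cons, Ssum_cons.
  set (y := e * est ell K s A B a).
  replace (exp (- e * (est ell K s A B a + Dsum ell K h a)
                - e ^ 2 * (est ell K s A B a ^ 2 + Ssum ell K h a)))
    with (w a * exp (- y - y ^ 2)) by (unfold w, y; rewrite <- exp_plus; f_equal; ring).
  apply Rmult_le_compat_l; [left; apply exp_pos|apply exp_neg_sub_sq_le].
  assert (Hy : Rabs y <= / 2); [|apply Rabs_le_between in Hy; lra].
  unfold y. rewrite Rabs_mult, Rabs_pos_eq by lra.
  eapply Rle_trans; [|apply Hsmall]. apply Rmult_le_compat_l; [lra|apply est_abs_le, Hx].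
Qed.

Lemma mix_est_le_ln_potential_drop s A B h : entry_ok (s, A, B) ->
  mix_est s h A B <= ln (potential h (eta ell K h)) / eta ell K h
                     - ln (potential ((s, A, B) :: h) (eta ell K h)) / eta ell K h.
Proof.
  intros Hx. pose proof (potential_cons_le s A B h Hx) as Hle. pose proof (eta_pos h) as He.
  set (e := eta ell K h) in *.
  set (P := potential h e) in *. set (P' := potential ((s, A, B) :: h) e) in *.
  assert (HP : 0 < P) by apply potential_pos. assert (HP' : 0 < P') by apply potential_pos.
  assert (Hpos : 0 < 1 - e * mix_est s h A B).
  { destruct (Rlt_dec 0 (1 - e * mix_est s h A B)) as [|Hn]; [assumption|]. nra. }
  apply ln_le in Hle; [|exact HP']. rewrite ln_mult in Hle by assumption.
  pose proof (ln_le_sub_1 _ Hpos).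
  apply (Rmult_le_reg_l e); [exact He|].
  replace (e * (ln P / e - ln P' / e)) with (ln P - ln P') by (field; lra). lra.
Qed.

Lemma ln_potential_div_rate_le h e e' : 0 < e' -> e' <= e ->
  ln (potential h e') / e' - ln (INR K) / e'
  <= ln (potential h e) / e - ln (INR K) / e + (e - e') * Smax h.
Proof.
  intros He' Hee.
  assert (HKp : 0 < INR K) by (apply lt_0_INR; lia).
  set (r := e' / e).
  assert (Hr : 0 < r <= 1).
  { unfold r. split; [apply Rdiv_lt_0_compat; lra|].
    apply (Rmult_le_reg_r e); [lra|]. unfold Rdiv. rewrite Rmult_assoc, Rinv_l; lra. }
  set (u := fun a => - e * Dsum ell K h a - e * e' * Ssum ell K h a).
  set (U := rsum (arms K) (fun a => exp (u a))).
  assert (HU : 0 < U) by (apply rsum_pos; [intros; apply exp_pos|apply arms_nonempty; lia]).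
  assert (Hjensen : potential h e' <= INR K * exp (r * ln (U / INR K))).
  { pose proof (rsum_exp_mul_le (arms K) u r ltac:(apply arms_nonempty; lia) Hr) as H.
    rewrite arms_length in H.
    unfold potential. eapply Rle_trans; [|exact H]. right. apply rsum_ext.
    intros a _. f_equal. unfold u, r. field. lra. }
  assert (Hshift : U <= potential h e * exp (e * (e - e') * Smax h)).
  { unfold U, potential. rewrite <- rsum_mult_r. apply rsum_le. intros a Ha. apply in_arms in Ha.
    replace (u a) with ((- e * Dsum ell K h a - e ^ 2 * Ssum ell K h a)
                        + e * (e - e') * Ssum ell K h a) by (unfold u; ring).
    rewrite exp_plus. apply Rmult_le_compat_l; [left; apply exp_pos|].
    apply exp_le_compat, Rmult_le_compat_l; [nra|apply Ssum_le_Smax, Ha]. }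
  pose proof (potential_pos h e') as HW'. pose proof (potential_pos h e) as HW.
  apply ln_le in Hjensen; [|exact HW']. rewrite ln_mult, ln_exp, ln_div in Hjensen
    by (try apply exp_pos; assumption).
  apply ln_le in Hshift; [|exact HU]. rewrite ln_mult, ln_exp in Hshift by (try apply exp_pos; assumption).
  assert (Hr' : r * (ln U - ln (INR K))
                <= r * (ln (potential h e) + e * (e - e') * Smax h - ln (INR K)))
    by (apply Rmult_le_compat_l; lra).
  apply (Rmult_le_reg_r e'); [exact He'|].
  replace ((ln (potential h e') / e' - ln (INR K) / e') * e')
    with (ln (potential h e') - ln (INR K)) by (field; lra).
  apply (Rle_trans _ (r * (ln (potential h e) + e * (e - e') * Smax h - ln (INR K)))); [lra|].
  right. unfold r. field. lra.
Qed.

(* Grows by at most [eta_t * (Smax_t - Smax_(t-1))] per round, which telescopes to the bound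
   [2 sqrt (ln K * Smax)]. *)
Definition regret_potential h : R :=
  hist_sum mix_est h + ln (potential h (eta ell K h)) / eta ell K h
  - ln (INR K) / eta ell K h + eta ell K h * Smax h.

Lemma regret_potential_le h : hist_ok h ->
  regret_potential h <= 2 * sqrt (ln (INR K)) * sqrt (Smax h).
Proof.
  induction h as [|[[s A] B] h IH]; intros Hh.
  - unfold regret_potential. rewrite potential_nil, Smax_nil, sqrt_0. simpl.
    pose proof (eta_pos []). right. field. lra.
  - inversion Hh as [|? ? Hx Hh']; subst. specialize (IH Hh').
    pose proof (eta_pos h) as He. pose proof (eta_pos ((s, A, B) :: h)) as He'.
    pose proof (mix_est_le_ln_potential_drop s A B h Hx) as Hdrop.
    pose proof (ln_potential_div_rate_le ((s, A, B) :: h) _ _ He' (eta_cons_le (s, A, B) h)) as Hrate.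
    assert (Hincr : eta ell K h * (Smax ((s, A, B) :: h) - Smax h)
                    <= 2 * sqrt (ln (INR K)) * (sqrt (Smax ((s, A, B) :: h)) - sqrt (Smax h))).
    { apply mul_sub_le_sqrt_sub; [split; [apply Smax_nonneg|apply Smax_cons_ge]|lra|].
      apply eta_mul_sqrt_Smax_cons_le, Hx. }
    unfold regret_potential in *. cbn [hist_sum]. lra.
Qed.

Lemma ln_potential_div_ge h a : (a < K)%nat ->
  - Dsum ell K h a - eta ell K h * Smax h <= ln (potential h (eta ell K h)) / eta ell K h.
Proof.
  intros Ha. pose proof (eta_pos h) as He. set (e := eta ell K h) in *.
  assert (Hterm : exp (- e * Dsum ell K h a - e ^ 2 * Ssum ell K h a) <= potential h e).
  { apply (rsum_ge_term _ (fun a => exp (- e * Dsum ell K h a - e ^ 2 * Ssum ell K h a))).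
    - intros; left; apply exp_pos.
    - apply in_arms, Ha. }
  apply ln_le in Hterm; [|apply exp_pos]. rewrite ln_exp in Hterm.
  pose proof (Ssum_le_Smax h a Ha).
  apply (Rmult_le_reg_l e); [exact He|].
  replace (e * (ln (potential h e) / e)) with (ln (potential h e)) by (field; lra). nra.
Qed.

Lemma mix_est_sum_sub_Dsum_le h a : hist_ok h -> (a < K)%nat ->
  hist_sum mix_est h - Dsum ell K h a
  <= 3 * sqrt (ln (INR K)) * sqrt (Smax h) + 4 * INR (K - 1) * ln (INR K).
Proof.
  intros Hh Ha.
  pose proof (regret_potential_le h Hh) as Hinv. unfold regret_potential in Hinv.
  pose proof (ln_potential_div_ge h a Ha).
  pose proof (ln_K_div_eta_le h).
  assert (HsL : sqrt (ln (INR K)) <= 2 * ln (INR K)).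
  { pose proof (sqrt_sqrt (ln (INR K)) ltac:(lra)). pose proof (sqrt_pos (ln (INR K))). nra. }
  assert (sqrt (ln (INR K)) * INR (K - 1) <= 2 * ln (INR K) * INR (K - 1))
    by (apply Rmult_le_compat_r; lra).
  lra.
Qed.

(** * Second moments of the estimates *)

Variable eps : R.
Hypothesis loss_range : forall t a a', (1 <= t)%nat -> (a < K)%nat -> (a' < K)%nat ->
  Rabs (ell t a - ell t a') <= eps.

Let kappa := (INR (K - 1) * eps) ^ 2 / ln 2.

Let kappa_nonneg : 0 <= kappa.
Proof. apply Rdiv_le_0_compat; [apply pow2_ge_0|pose proof ln_2_ge_3_5; lra]. Qed.

Fixpoint secondary_count (b : nat) (h : hist) : nat :=
  match h with
  | [] => O
  | (_, _, B) :: h' => ((if Nat.eqb B b then 1 else 0) + secondary_count b h')%nat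
  end.

Lemma Ssum_le_secondary_count h a : hist_ok h ->
  Ssum ell K h a <= (INR (K - 1) * eps) ^ 2 * INR (secondary_count a h).
Proof.
  induction h as [|[[s A] B] h IH]; intros Hh; simpl; [lra|].
  inversion Hh as [|? ? Hx Hh']; subst. destruct Hx as [Hs [HA HB]]. specialize (IH Hh').
  rewrite plus_INR. unfold est. destruct (Nat.eqb_spec B a) as [->|]; simpl INR.
  - pose proof (loss_range s a A Hs HB HA) as Hr.
    assert ((ell s a - ell s A) ^ 2 <= eps ^ 2).
    { rewrite <- (pow2_abs (ell s a - ell s A)). apply pow_incr. split; [apply Rabs_pos|exact Hr]. }
    assert ((INR (K - 1) * (ell s a - ell s A)) ^ 2 <= (INR (K - 1) * eps) ^ 2).
    { rewrite !Rpow_mult_distr. apply Rmult_le_compat_l; [apply pow2_ge_0|assumption]. }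
    lra.
  - lra.
Qed.

Definition pow2_count_sum h : R := rsum (arms K) (fun b => 2 ^ secondary_count b h).

Lemma Smax_le_ln_pow2_count_sum h : hist_ok h ->
  Smax h <= kappa * ln (pow2_count_sum h).
Proof.
  intros Hh. pose proof ln_2_ge_3_5 as Hln2. pose proof kappa_nonneg as Hk.
  assert (Hterm : forall b, (b < K)%nat -> 2 ^ secondary_count b h <= pow2_count_sum h).
  { intros b Hb. apply (rsum_ge_term _ (fun b => 2 ^ secondary_count b h)).
    - intros. apply pow_le. lra.
    - apply in_arms, Hb. }
  apply fold_max_le.
  - apply Rmult_le_pos; [exact Hk|]. rewrite <- ln_1. apply ln_le; [lra|].
    apply (Rle_trans _ (2 ^ secondary_count 0 h)); [apply pow_R1_Rle; lra|apply Hterm; lia].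
  - intros a Ha. apply in_arms in Ha.
    eapply Rle_trans; [apply Ssum_le_secondary_count, Hh|].
    apply (Rle_trans _ (kappa * ln (2 ^ secondary_count a h))).
    + rewrite ln_pow by lra. right. unfold kappa. field. lra.
    + apply Rmult_le_compat_l; [exact Hk|]. apply ln_le; [apply pow_lt; lra|apply Hterm, Ha].
Qed.

(* The secondary arm of a round hits [b] with probability at most [1 / (K - 1)]. *)
Lemma round_mean_doubling_le h b : (b < K)%nat ->
  round_mean h (fun _ B => if Nat.eqb B b then 2 else 1) <= 1 + 1 / INR (K - 1).
Proof.
  intros Hb.
  rewrite (round_mean_ext _ _ (fun A B => 1 + (if Nat.eqb B b then 1 else 0)))
    by (intros; destruct (Nat.eqb B b); ring).
  rewrite round_mean_plus, round_mean_const. apply Rplus_le_compat_l.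
  unfold round_mean.
  rewrite (rsum_ext _ _ (fun A => prob ell K h A * (1 / INR (K - 1)) * (1 - if Nat.eqb A b then 1 else 0))).
  - apply (Rle_trans _ (rsum (arms K) (fun A => prob ell K h A * (1 / INR (K - 1))))).
    + apply rsum_le. intros A _. rewrite <- (Rmult_1_r (prob ell K h A * _)) at 2.
      apply Rmult_le_compat_l.
      * apply Rmult_le_pos; [apply prob_nonneg|left; apply Rdiv_lt_0_compat; lra].
      * destruct (Nat.eqb A b); lra.
    + rewrite rsum_mult_r, prob_sum. lra.
  - intros A HA. apply in_arms in HA. rewrite rsum_secondary by exact HA.
    rewrite rsum_arms_indicator by exact Hb.
    reflexivity.
Qed.

Lemma future_mean_pow2_count_le n t h b : (b < K)%nat ->
  future_mean n t h (fun h' => 2 ^ secondary_count b h')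
  <= 2 ^ secondary_count b h * (1 + 1 / INR (K - 1)) ^ n.
Proof.
  intros Hb. revert t h; induction n; intros t h; simpl; [lra|].
  set (g := 1 + 1 / INR (K - 1)) in *.
  assert (Hg : 0 <= g) by (unfold g; pose proof (Rdiv_lt_0_compat 1 _ Rlt_0_1 Km1_pos); lra).
  apply (Rle_trans _ (round_mean h (fun _ B => 2 ^ secondary_count b h * g ^ n
                                               * (if Nat.eqb B b then 2 else 1)))).
  - apply round_mean_le. intros A B _ _ _. eapply Rle_trans; [apply IHn|]. right.
    simpl secondary_count. destruct (Nat.eqb B b); simpl; ring.
  - rewrite round_mean_mult_l.
    replace (2 ^ secondary_count b h * (g * g ^ n)) with (2 ^ secondary_count b h * g ^ n * g) by ring.
    apply Rmult_le_compat_l; [|apply round_mean_doubling_le, Hb].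
    apply Rmult_le_pos; apply pow_le; lra.
Qed.

Lemma future_mean_pow2_count_sum_le T :
  future_mean T 1 [] pow2_count_sum <= INR K * (1 + 1 / INR (K - 1)) ^ T.
Proof.
  unfold pow2_count_sum. rewrite future_mean_rsum.
  apply (Rle_trans _ (rsum (arms K) (fun _ => (1 + 1 / INR (K - 1)) ^ T))).
  - apply rsum_le. intros b Hb. apply in_arms in Hb.
    eapply Rle_trans; [apply future_mean_pow2_count_le, Hb|]. simpl. lra.
  - rewrite rsum_arms_const. lra.
Qed.

Lemma eps_nonneg : 0 <= eps.
Proof.
  pose proof (loss_range 1 0 0 (le_n 1) ltac:(lia) ltac:(lia)) as H.
  rewrite Rminus_diag, Rabs_R0 in H. exact H.
Qed.

Lemma regret_vs_arm_le_eps_mul_T a T : (a < K)%nat ->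
  SODA_expected_loss ell K T - cum_loss ell a T <= INR T * eps.
Proof.
  intros Ha. rewrite regret_vs_arm_eq.
  eapply Rle_trans.
  - apply (future_mean_le _ _ _ _ (hist_sum (fun _ _ _ _ => eps))); [|constructor|lia].
    intros h Hh. induction h as [|[[s A] B] h IH]; simpl; [lra|].
    inversion Hh as [|? ? Hx Hh']; subst. destruct Hx as [Hs [HA _]].
    pose proof (loss_range s A a Hs HA Ha) as Hr. apply Rabs_le_between in Hr.
    specialize (IH Hh'). lra.
  - rewrite (future_mean_hist_sum _ _ _ _ (fun _ => eps)) by (intros; apply round_mean_const).
    simpl. rewrite rsum_const, length_seq. lra.
Qed.

Lemma mix_est_sum_sub_Dsum_le_affine h a d c : hist_ok h -> (a < K)%nat -> 0 < d -> 0 < c ->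
  hist_sum mix_est h - Dsum ell K h a
  <= 3 / 2 * (ln (INR K) * kappa * (pow2_count_sum h / c + ln c - 1) / d + d)
     + 4 * INR (K - 1) * ln (INR K).
Proof.
  intros Hh Ha Hd Hc.
  pose proof (Smax_nonneg h) as HQ.
  assert (HS : 0 < pow2_count_sum h).
  { apply rsum_pos; [intros; apply pow_lt; lra|apply arms_nonempty; lia]. }
  assert (HLQ : ln (INR K) * Smax h <= ln (INR K) * kappa * (pow2_count_sum h / c + ln c - 1)).
  { rewrite Rmult_assoc. apply Rmult_le_compat_l; [lra|].
    eapply Rle_trans; [apply Smax_le_ln_pow2_count_sum, Hh|].
    apply Rmult_le_compat_l; [exact kappa_nonneg|apply ln_le_div_add_ln_sub_1; assumption]. }
  assert (Hamgm : 2 * (sqrt (ln (INR K)) * sqrt (Smax h)) <= ln (INR K) * Smax h / d + d).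
  { rewrite <- sqrt_mult_alt by lra. apply two_sqrt_le_div_plus; [nra|exact Hd]. }
  assert (ln (INR K) * Smax h / d <= ln (INR K) * kappa * (pow2_count_sum h / c + ln c - 1) / d)
    by (apply Rmult_le_compat_r; [left; apply Rinv_0_lt_compat|]; assumption).
  pose proof (mix_est_sum_sub_Dsum_le h a Hh Ha). lra.
Qed.

Lemma regret_vs_arm_le_div_plus a T d : (a < K)%nat -> 0 < d ->
  SODA_expected_loss ell K T - cum_loss ell a T
  <= 3 / 2 * (ln (INR K) * kappa * (ln (INR K) + INR T / INR (K - 1)) / d + d)
     + 4 * INR (K - 1) * ln (INR K).
Proof.
  intros Ha Hd.
  set (L := ln (INR K)) in *. set (C := 4 * INR (K - 1) * L).
  set (g := 1 + 1 / INR (K - 1)).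
  assert (Hg : 1 < g) by (unfold g; pose proof (Rdiv_lt_0_compat 1 _ Rlt_0_1 Km1_pos); lra).
  (* [c] bounds the mean of [pow2_count_sum]; bounding [ln] by its tangent at [c] makes the
     per-history bound affine in [pow2_count_sum], so that its mean can be taken. *)
  set (c := INR K * g ^ T).
  assert (HKp : 0 < INR K) by (apply lt_0_INR; lia).
  assert (Hc : 0 < c) by (apply Rmult_lt_0_compat; [exact HKp|apply pow_lt; lra]).
  assert (Hlnc : ln c <= L + INR T / INR (K - 1)).
  { unfold c, g, Rdiv. rewrite Rmult_1_l. apply ln_mul_pow_le; [exact HKp|].
    left. apply Rinv_0_lt_compat, Km1_pos. }
  set (alpha := 3 / 2 * (L * kappa / (d * c))).
  set (beta := 3 / 2 * (L * kappa * (ln c - 1) / d + d) + C).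
  rewrite regret_vs_arm_eq_mix_est by exact Ha.
  apply (Rle_trans _ (future_mean T 1 [] (fun h => alpha * pow2_count_sum h + beta))).
  { apply future_mean_le; [|constructor|lia]. intros h Hh.
    eapply Rle_trans; [apply (mix_est_sum_sub_Dsum_le_affine h a d c Hh Ha Hd Hc)|].
    right. unfold alpha, beta, C, L. field. lra. }
  rewrite future_mean_plus, future_mean_mult_l, future_mean_const.
  assert (Halpha : 0 <= alpha).
  { unfold alpha. apply Rmult_le_pos; [lra|]. apply Rdiv_le_0_compat; [|nra].
    apply Rmult_le_pos; [lra|exact kappa_nonneg]. }
  assert (alpha * future_mean T 1 [] pow2_count_sum <= alpha * c)
    by (apply Rmult_le_compat_l; [exact Halpha|apply future_mean_pow2_count_sum_le]).
  assert (L * kappa * ln c / d <= L * kappa * (L + INR T / INR (K - 1)) / d).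
  { apply Rmult_le_compat_r; [left; apply Rinv_0_lt_compat, Hd|].
    apply Rmult_le_compat_l; [apply Rmult_le_pos; [lra|exact kappa_nonneg]|exact Hlnc]. }
  assert (alpha * c + beta = 3 / 2 * (L * kappa * ln c / d + d) + C)
    by (unfold alpha, beta; field; lra).
  lra.
Qed.

Lemma regret_vs_arm_le_sqrt a T : (a < K)%nat ->
  SODA_expected_loss ell K T - cum_loss ell a T
  <= 3 * sqrt (eps ^ 2 * (INR (K - 1) * ln (INR K)) * (INR (K - 1) * ln (INR K) + INR T) / ln 2)
     + 4 * INR (K - 1) * ln (INR K).
Proof.
  intros Ha. pose proof ln_2_ge_3_5.
  set (M := ln (INR K) * kappa * (ln (INR K) + INR T / INR (K - 1))).
  replace (eps ^ 2 * (INR (K - 1) * ln (INR K)) * (INR (K - 1) * ln (INR K) + INR T) / ln 2)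
    with M by (unfold M, kappa; field; lra).
  assert (HM : 0 <= M).
  { apply Rmult_le_pos; [apply Rmult_le_pos; [lra|exact kappa_nonneg]|].
    pose proof (Rdiv_le_0_compat (INR T) _ (pos_INR T) Km1_pos). lra. }
  pose proof (le_two_sqrt_of_forall_le_div_plus
                (2 / 3 * (SODA_expected_loss ell K T - cum_loss ell a T - 4 * INR (K - 1) * ln (INR K)))
                M HM) as Hopt.
  assert (2 / 3 * (SODA_expected_loss ell K T - cum_loss ell a T - 4 * INR (K - 1) * ln (INR K))
          <= 2 * sqrt M); [|lra].
  apply Hopt. intros d Hd. pose proof (regret_vs_arm_le_div_plus a T d Ha Hd) as Hd_bound.
  fold M in Hd_bound. lra.
Qed.

Lemma SODA_regret_attained T : exists a, (a < K)%nat /\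
  SODA_regret ell K T = SODA_expected_loss ell K T - cum_loss ell a T.
Proof.
  unfold SODA_regret.
  destruct (fold_min_attained (fun a => cum_loss ell a T) (cum_loss ell 0 T) (arms K))
    as [E|[a [Ha E]]]; rewrite E.
  - exists 0%nat. split; [lia|reflexivity].
  - exists a. split; [apply in_arms, Ha|reflexivity].
Qed.

End SODA.

Lemma short_horizon_bound eps L T X : 0 <= eps -> 0 < L -> 0 <= T <= 16 * L -> 0 <= X ->
  T * eps <= 4 * eps * sqrt L * sqrt (T + X).
Proof.
  intros He HL HT HX.
  assert (HsT : sqrt T <= 4 * sqrt L).
  { replace 4 with (sqrt 16) by (replace 16 with (4 ^ 2) by ring; apply sqrt_pow2; lra).
    rewrite <- sqrt_mult_alt by lra. apply sqrt_le_1_alt. lra. }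
  assert (HsTX : sqrt T <= sqrt (T + X)) by (apply sqrt_le_1_alt; lra).
  pose proof (sqrt_sqrt T ltac:(lra)). pose proof (sqrt_pos T). pose proof (sqrt_pos L).
  assert (T <= 4 * sqrt L * sqrt (T + X)) by nra.
  nra.
Qed.

(* Uses [ln 2 >= 3/5]: then [9 (L + T) <= 9 * 17/16 * T <= 16 ln 2 * T] once [T >= 16 L]. *)
Lemma long_horizon_bound eps L T X : 0 <= eps -> 0 < L -> 16 * L < T -> 0 <= X ->
  3 * sqrt (eps ^ 2 * L * (L + T) / ln 2) <= 4 * eps * sqrt L * sqrt (T + X).
Proof.
  intros He HL HT HX. pose proof ln_2_ge_3_5.
  assert (Hsq : eps ^ 2 * L * (L + T) / ln 2 <= (4 / 3 * (eps * sqrt L * sqrt (T + X))) ^ 2).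
  { rewrite !Rpow_mult_distr, !pow2_sqrt by lra.
    apply (Rmult_le_reg_r (ln 2)); [lra|]. unfold Rdiv. rewrite Rmult_assoc, Rinv_l by lra.
    assert (0 <= eps ^ 2 * L) by (apply Rmult_le_pos; [apply pow2_ge_0|lra]).
    assert (9 * (L + T) <= 16 * ln 2 * (T + X)) by nra.
    nra. }
  apply sqrt_le_1_alt in Hsq. rewrite sqrt_pow2 in Hsq.
  - lra.
  - pose proof (sqrt_pos L). pose proof (sqrt_pos (T + X)).
    apply Rmult_le_pos; [lra|]. apply Rmult_le_pos; [apply Rmult_le_pos|]; lra.
Qed.

Theorem theorem1 (K : nat) (ell : nat -> nat -> R) (eps : R) (T : nat) :
  (2 <= K)%nat ->
  (forall t a, (1 <= t)%nat -> (a < K)%nat -> 0 <= ell t a <= 1) ->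
  (forall t a a', (1 <= t)%nat -> (a < K)%nat -> (a' < K)%nat ->
     Rabs (ell t a - ell t a') <= eps) ->
  (1 <= T)%nat ->
  SODA_regret ell K T <=
    4 * eps * sqrt (INR (K - 1) * ln (INR K)) *
      sqrt (INR T + INR (K - 1) * sqrt (INR T) *
              (2 + sqrt (ln (sqrt (INR T) * INR (K - 1)) / 2)))
    + 4 * INR (K - 1) * ln (INR K).
Proof.
  intros HK Hloss Hrange _.
  destruct (SODA_regret_attained ell K HK T) as [a [Ha ->]].
  pose proof (eps_nonneg ell K HK eps Hrange) as He.
  set (L := INR (K - 1) * ln (INR K)).
  assert (HL : 0 < L).
  { apply Rmult_lt_0_compat; [apply lt_0_INR; lia|].
    rewrite <- ln_1. apply ln_increasing; [lra|apply (lt_INR 1); lia]. }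
  set (X := INR (K - 1) * sqrt (INR T) * (2 + sqrt (ln (sqrt (INR T) * INR (K - 1)) / 2))).
  assert (HX : 0 <= X).
  { pose proof (sqrt_pos (INR T)). pose proof (sqrt_pos (ln (sqrt (INR T) * INR (K - 1)) / 2)).
    apply Rmult_le_pos; [apply Rmult_le_pos; [apply pos_INR|assumption]|lra]. }
  assert (HC : 0 <= 4 * INR (K - 1) * ln (INR K)) by (unfold L in HL; nra).
  destruct (Rle_dec (INR T) (16 * L)) as [Hshort|Hlong].
  - pose proof (regret_vs_arm_le_eps_mul_T ell K HK eps Hrange a T Ha).
    pose proof (short_horizon_bound eps L (INR T) X He HL (conj (pos_INR T) Hshort) HX).
    lra.
  - pose proof (regret_vs_arm_le_sqrt ell K HK Hloss eps Hrange a T Ha).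
    pose proof (long_horizon_bound eps L (INR T) X He HL ltac:(lra) HX).
    unfold L in *. lra.
Qed.
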